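(* Let $n$ be even, $V=V_1\sqcup V_2$ with $|V_1|=|V_2|=n/2$, and $0\le q<p\le 1$. Consider the complete weighted graph on $V$ with $w(u,v)=p$ for distinct $u,v$ in the same block, $w(u,v)=q$ for $u,v$ in different blocks, and $w(v,v)=0$, and the cost $c(\{A,A^\complement\})=\sum_{u\in A,v\in A^\complement}w(u,v)$ of a cut. Let $P=\{A,A^\complement\}$ be a cut of $V$, and let $\alpha_i=|A\cap V_i|/|V_i|$ and $\beta_i=|A^\complement\cap V_i|/|V_i|=1-\alpha_i$ for $i=1,2$. If $\alpha_2\ge(1-2\alpha_1)q/p$, then $c(\{A\cup V_2,A^\complement\setminus V_2\})\le c(P)$. Similarly, if $\beta_2\ge(1-2\beta_1)q/p$, then $c(\{A\setminus V_2,A^\complement\cup V_2\})\le c(P)$. *)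

From mathcomp Require Import all_boot all_order all_algebra.
Set Implicit Arguments. Unset Strict Implicit. Unset Printing Implicit Defensive.
Import Order.TTheory GRing.Theory Num.Theory.
Local Open Scope ring_scope.

Definition sbm_weight (R : pzRingType) (T : finType) (V1 V2 : {set T}) (p q : R)
  (u v : T) : R :=
  if u == v then 0
  else if ((u \in V1) && (v \in V1)) || ((u \in V2) && (v \in V2)) then p else q.

Definition cut_cost (R : pzRingType) (T : finType) (w : T -> T -> R) (A : {set T}) : R :=
  \sum_(u in A) \sum_(v in ~: A) w u v.

From mathcomp Require Import all_boot all_order all_algebra.
From mathcomp Require Import ring.
Import Order.TTheory GRing.Theory Num.Theory.
Local Open Scope ring_scope.

(** Write [a_i], [b_i] for the sizes of [A] and of its complement inside the
    block [V_i]. The cut cost is [p (a1 b1 + a2 b2) + q (a1 b2 + a2 b1)], so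
    moving the [b2] vertices of [V2 :\: A] across the cut lowers it by
    [b2 (p a2 - q (b1 - a1))]; when the blocks have equal size [m], the
    hypothesis [alpha2 >= (1 - 2 alpha1) q / p] is exactly
    [p a2 >= q (m - 2 a1) = q (b1 - a1)]. The second claim is the first one
    applied to the complement of [A], since the cost of a cut does not depend
    on which side is called [A]. *)

Lemma cut_costC {R : pzRingType} {T : finType} (w : T -> T -> R) (A : {set T}) :
  (forall u v, w u v = w v u) -> cut_cost w (~: A) = cut_cost w A.
Proof.
by move=> wC; rewrite /cut_cost setCK exchange_big; apply: eq_bigr => u _;
  apply: eq_bigr => v _; rewrite wC.
Qed.

Lemma cardsIC {T : finType} (A S : {set T}) :
  #|A :&: S| + #|~: A :&: S| = #|S|.
Proof. by rewrite -(cardsID A S) setDE ![S :&: _]setIC. Qed.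

Lemma setC_partition {T : finType} {V1 V2 : {set T}} :
  V1 :&: V2 = set0 -> V1 :|: V2 = [set: T] -> V2 = ~: V1.
Proof.
move=> disj cover; apply/setP => x.
move/setP/(_ x): disj; move/setP/(_ x): cover.
by rewrite !inE; case: (x \in V1) (x \in V2) => [] [].
Qed.

Section BlockCutCost.

Context {R : comPzRingType} {T : finType} (V : {set T}) (p q : R).

Let w := sbm_weight V (~: V) p q.

Lemma sbm_weightC u v : w u v = w v u.
Proof.
rewrite /w /sbm_weight eq_sym.
by case: (u \in V) (v \in V) (u \in ~: V) (v \in ~: V) => [] [] [] [].
Qed.

Lemma sbm_weight_neq u v :
  u != v -> w u v = if (u \in V) == (v \in V) then p else q.
Proof.
by move/negbTE=> uv; rewrite /w /sbm_weight uv !inE; case: (u \in V) (v \in V) => [] [].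
Qed.

Lemma sum_sbm_weight_out (B : {set T}) u : u \in B ->
  \sum_(v in ~: B) w u v =
  (if u \in V then p else q) * #|~: B :&: V|%:R
  + (if u \in V then q else p) * #|~: B :&: ~: V|%:R.
Proof.
move=> uB; rewrite (big_setID V) /= setDE !mulr_natr -!sumr_const.
congr (_ + _); apply: eq_bigr => v; rewrite !inE => /andP[vB vV];
  have uv : u != v by apply: contraNneq vB => <-.
- by rewrite sbm_weight_neq // vV; case: (u \in V).
- by rewrite sbm_weight_neq // (negbTE vV); case: (u \in V).
Qed.

Lemma cut_cost_sbm (B : {set T}) :
  cut_cost w B =
  p * (#|B :&: V|%:R * #|~: B :&: V|%:R + #|B :&: ~: V|%:R * #|~: B :&: ~: V|%:R)
  + q * (#|B :&: V|%:R * #|~: B :&: ~: V|%:R + #|B :&: ~: V|%:R * #|~: B :&: V|%:R).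
Proof.
rewrite /cut_cost (big_setID V) /= setDE.
rewrite (eq_bigr (fun=> p * #|~: B :&: V|%:R + q * #|~: B :&: ~: V|%:R)); last first.
  by move=> u; rewrite inE => /andP[uB uV]; rewrite sum_sbm_weight_out // uV.
rewrite [X in _ + X](eq_bigr (fun=> q * #|~: B :&: V|%:R + p * #|~: B :&: ~: V|%:R)); last first.
  by move=> u; rewrite !inE => /andP[uB uV]; rewrite sum_sbm_weight_out // (negbTE uV).
by rewrite !sumr_const; ring.
Qed.

Lemma cut_cost_setU_block (A : {set T}) :
  cut_cost w (A :|: ~: V)
  + #|~: A :&: ~: V|%:R
    * (p * #|A :&: ~: V|%:R - q * (#|~: A :&: V|%:R - #|A :&: V|%:R))
  = cut_cost w A.
Proof.
rewrite !cut_cost_sbm.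
have -> : (A :|: ~: V) :&: V = A :&: V by rewrite setIUl [~: V :&: V]setIC setICr setU0.
have -> : (A :|: ~: V) :&: ~: V = ~: V by rewrite setIC setKU.
have -> : ~: (A :|: ~: V) :&: V = ~: A :&: V by rewrite setCU setCK -setIA setIid.
have -> : ~: (A :|: ~: V) :&: ~: V = set0 by rewrite setCU setCK -setIA setICr setI0.
by rewrite cards0 -(cardsIC A (~: V)) natrD; ring.
Qed.

End BlockCutCost.

Lemma ratio_condition_cleared (R : realFieldType) (p q : R) (a1 b1 a2 : nat) :
  0 < p -> (0 < a1 + b1)%N ->
  (1 - 2 * (a1%:R / (a1 + b1)%:R)) * q / p <= a2%:R / (a1 + b1)%:R ->
  q * (b1%:R - a1%:R) <= p * a2%:R.
Proof.
move=> p0 m0 cond; have m0R : 0 < (a1 + b1)%:R :> R by rewrite ltr0n.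
rewrite -subr_ge0.
have -> : p * a2%:R - q * (b1%:R - a1%:R) = (a1 + b1)%:R * p
    * (a2%:R / (a1 + b1)%:R - (1 - 2 * (a1%:R / (a1 + b1)%:R)) * q / p).
  by rewrite natrD; field; rewrite -natrD !gt_eqF.
by rewrite mulr_ge0 ?subr_ge0 // mulr_ge0 // ltW.
Qed.

Lemma cut_cost_setU_block_le (R : realFieldType) (T : finType) (V : {set T})
    (p q : R) (A : {set T}) :
  0 < p -> #|~: V| = #|V| ->
  (1 - 2 * (#|A :&: V|%:R / #|V|%:R)) * q / p <= #|A :&: ~: V|%:R / #|~: V|%:R ->
  cut_cost (sbm_weight V (~: V) p q) (A :|: ~: V)
  <= cut_cost (sbm_weight V (~: V) p q) A.
Proof.
move=> p0 cardC cond; rewrite -(cut_cost_setU_block V p q A) lerDl.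
have [V0 | Vpos] := posnP #|V|.
  suff /eqP -> : #|~: A :&: ~: V| == 0%N by rewrite mul0r.
  by rewrite -leqn0 -V0 -cardC subset_leq_card ?subsetIr.
apply: mulr_ge0 => //; rewrite subr_ge0.
rewrite cardC -(cardsIC A V) in cond Vpos.
exact: ratio_condition_cleared cond.
Qed.

Theorem lemma3 (R : realFieldType) (T : finType) (n : nat) (V1 V2 : {set T})
  (p q : R) (A : {set T}) :
  ~~ odd n -> #|T| = n ->
  V1 :&: V2 = set0 -> V1 :|: V2 = [set: T] ->
  #|V1| = n./2 -> #|V2| = n./2 ->
  0 <= q -> q < p -> p <= 1 ->
  let w := sbm_weight V1 V2 p q in
  let alpha1 := #|A :&: V1|%:R / #|V1|%:R in
  let alpha2 := #|A :&: V2|%:R / #|V2|%:R in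
  let beta1 := #|~: A :&: V1|%:R / #|V1|%:R in
  let beta2 := #|~: A :&: V2|%:R / #|V2|%:R in
  (alpha2 >= (1 - 2 * alpha1) * q / p ->
     cut_cost w (A :|: V2) <= cut_cost w A) /\
  (beta2 >= (1 - 2 * beta1) * q / p ->
     cut_cost w (A :\: V2) <= cut_cost w A).
Proof.
move=> _ _ disj cover cardV1 cardV2 q0 qp _.
have p0 : 0 < p := le_lt_trans q0 qp.
rewrite (setC_partition disj cover) in cardV2 * => w alpha1 alpha2 beta1 beta2.
have cardC : #|~: V1| = #|V1| by rewrite cardV1 cardV2.
split => cond; first exact: cut_cost_setU_block_le.
have wC := sbm_weightC V1 p q.
rewrite -(cut_costC w A wC) -(cut_costC w (A :\: ~: V1) wC) setCD.
exact: cut_cost_setU_block_le.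
Qed.
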